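(* Let $\Omega=\mathbb N$, $\Sigma=2^{\mathbb N}$ and $\mu$ a finite measure with $\mu(\{n\})>0$ for all $n$, and let $X(\mu)$ be a Banach sequence space (a vector space of real sequences with a complete norm). Then $X(\mu)$ has an equivalent norm under which it is a Banach function space if and only if $X(\mu)$ is a Banach rectangular function space.
   Context: Rectangular: for some $C>0$, $\chi_Af\in X(\mu)$ and $\|\chi_Af\|\le C\|f\|$ for all $f\in X(\mu)$, $A\subseteq\mathbb N$. A Banach function space (here) is a space of real sequences with a complete norm which is an ideal (if $|f|\le|g|$ coordinatewise and $g$ is in the space, then $f$ is in the space) and whose norm satisfies $\|f\|\le\|g\|$ whenever $|f|\le|g|$. *)

From Stdlib Require Import Reals.
Open Scope R_scope.

Definition seqR := nat -> R.

Definition szero : seqR := fun _ => 0.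
Definition sadd (f g : seqR) : seqR := fun n => f n + g n.
Definition sscal (c : R) (f : seqR) : seqR := fun n => c * f n.
Definition ssub (f g : seqR) : seqR := fun n => f n - g n.

Definition is_subspace (X : seqR -> Prop) : Prop :=
  X szero /\
  (forall f g, X f -> X g -> X (sadd f g)) /\
  (forall c f, X f -> X (sscal c f)).

(* N is a norm on X (only its values on X matter). *)
Definition is_norm_on (X : seqR -> Prop) (N : seqR -> R) : Prop :=
  (forall f, X f -> 0 <= N f) /\
  (forall f, X f -> N f = 0 -> f = szero) /\
  (forall c f, X f -> N (sscal c f) = Rabs c * N f) /\
  (forall f g, X f -> X g -> N (sadd f g) <= N f + N g).

Definition is_complete (X : seqR -> Prop) (N : seqR -> R) : Prop :=
  forall u : nat -> seqR,
    (forall k, X (u k)) ->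
    (forall eps, 0 < eps -> exists K, forall m n, (K <= m)%nat -> (K <= n)%nat ->
        N (ssub (u m) (u n)) < eps) ->
    exists f, X f /\
      forall eps, 0 < eps -> exists K, forall n, (K <= n)%nat -> N (ssub (u n) f) < eps.

Definition banach_seq_space (X : seqR -> Prop) (N : seqR -> R) : Prop :=
  is_subspace X /\ is_norm_on X N /\ is_complete X N.

Definition is_ideal (X : seqR -> Prop) : Prop :=
  forall f g, X g -> (forall n, Rabs (f n) <= Rabs (g n)) -> X f.

Definition is_lattice_norm (X : seqR -> Prop) (N : seqR -> R) : Prop :=
  forall f g, X f -> X g -> (forall n, Rabs (f n) <= Rabs (g n)) -> N f <= N g.

Definition banach_function_space (X : seqR -> Prop) (N : seqR -> R) : Prop :=
  banach_seq_space X N /\ is_ideal X /\ is_lattice_norm X N.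

Definition equivalent_norms (X : seqR -> Prop) (N1 N2 : seqR -> R) : Prop :=
  exists a b, 0 < a /\ 0 < b /\
    forall f, X f -> a * N1 f <= N2 f /\ N2 f <= b * N1 f.

Definition chi (A : nat -> bool) (f : seqR) : seqR :=
  fun n => if A n then f n else 0.

Definition is_rectangular (X : seqR -> Prop) (N : seqR -> R) : Prop :=
  exists C, 0 < C /\
    forall (f : seqR) (A : nat -> bool), X f -> X (chi A f) /\ N (chi A f) <= C * N f.

Definition banach_rectangular_function_space (X : seqR -> Prop) (N : seqR -> R) : Prop :=
  banach_seq_space X N /\ is_rectangular X N.

(* If [X] is an ideal with a lattice norm [M] equivalent to [N], rectangularity is
   immediate from [|chi_A f| <= |f|]. Conversely, let [N (chi_A f) <= C N f]. A
   sequence [h] with values in [[0, 1]] is the sum of its binary digits,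
   [h = sum_k 2^-(k+1) 1_{A_k}], so the partial sums of [sum_k 2^-(k+1) chi_{A_k} g]
   form an [N]-Cauchy sequence; its limit is [h g], because rectangularity also makes
   the coordinate functionals bounded. Hence [N (h g) <= C N g], and
   [N (h g) <= (2C + 1) N g] when [|h| <= 1]. The norm [f |-> sup_{|h| <= 1} N (h f)]
   is then equivalent to [N], and it is a lattice norm because [|f| <= |g|] means
   [f = k g] with [|k| <= 1]. *)
From Stdlib Require Import Reals Lra ClassicalEpsilon Classical FunctionalExtensionality.
Open Scope R_scope.

Definition smul (h f : seqR) : seqR := fun n => h n * f n.

Definition cauchy_in (N : seqR -> R) (u : nat -> seqR) : Prop :=
  forall eps, 0 < eps -> exists K, forall m n, (K <= m)%nat -> (K <= n)%nat ->
    N (ssub (u m) (u n)) < eps.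

Definition converges_in (N : seqR -> R) (u : nat -> seqR) (f : seqR) : Prop :=
  forall eps, 0 < eps -> exists K, forall n, (K <= n)%nat -> N (ssub (u n) f) < eps.

Lemma pow_half_pos k : 0 < (/2)^k.
Proof. apply pow_lt; lra. Qed.

Lemma pow_half_small B eps : 0 < eps ->
  exists K, forall k, (K <= k)%nat -> B * (/2)^k < eps.
Proof.
  intros Heps.
  assert (Hq : Rabs (/2) < 1) by (rewrite Rabs_pos_eq; lra).
  destruct (pow_lt_1_zero (/2) Hq (eps / (Rabs B + 1))) as [K HK].
  { apply Rdiv_lt_0_compat; pose proof (Rabs_pos B); lra. }
  exists K; intros k Hk.
  specialize (HK k Hk); rewrite Rabs_pos_eq in HK by (left; apply pow_half_pos).
  pose proof (pow_half_pos k); pose proof (Rabs_pos B); pose proof (Rle_abs B).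
  apply (Rmult_lt_compat_l (Rabs B + 1)) in HK; [|lra].
  replace ((Rabs B + 1) * (eps / (Rabs B + 1))) with eps in HK by (field; lra).
  nra.
Qed.

Lemma Un_cv_pow_half_error (x : nat -> R) a B :
  (forall k, Rabs (x k - a) <= B * (/2)^k) -> Un_cv x a.
Proof.
  intros Hx eps Heps. destruct (pow_half_small B eps Heps) as [K HK].
  exists K; intros k Hk. unfold R_dist. specialize (Hx k). specialize (HK k Hk). lra.
Qed.

Lemma dominated_smul f g : (forall n, Rabs (f n) <= Rabs (g n)) ->
  exists k, (forall n, Rabs (k n) <= 1) /\ f = smul k g.
Proof.
  intros Hfg.
  exists (fun n => if Req_EM_T (g n) 0 then 0 else f n / g n). split.
  - intro n. destruct (Req_EM_T (g n) 0) as [E|E]; [rewrite Rabs_R0; lra|].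
    assert (Hg : 0 < Rabs (g n)) by (apply Rabs_pos_lt; auto).
    unfold Rdiv; rewrite Rabs_mult, Rabs_inv.
    apply (Rmult_le_reg_r (Rabs (g n))); auto.
    rewrite Rmult_assoc, Rinv_l by lra. specialize (Hfg n); lra.
  - apply functional_extensionality; intro n; unfold smul.
    destruct (Req_EM_T (g n) 0) as [E|E]; [|field; auto].
    specialize (Hfg n); rewrite E, Rabs_R0 in Hfg.
    destruct (Req_dec (f n) 0) as [Hf|Hf]; [lra|].
    apply Rabs_pos_lt in Hf; lra.
Qed.

Fixpoint dyadic_approx (h : seqR) (k : nat) : seqR :=
  match k with
  | O => szero
  | S k => fun n => dyadic_approx h k n +
      (if Rle_dec ((/2)^(S k)) (h n - dyadic_approx h k n) then (/2)^(S k) else 0)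
  end.

Definition dyadic_digit (h : seqR) (k : nat) : nat -> bool :=
  fun n => if Rle_dec ((/2)^(S k)) (h n - dyadic_approx h k n) then true else false.

Lemma dyadic_approx_S h k n :
  dyadic_approx h (S k) n =
  dyadic_approx h k n + (if dyadic_digit h k n then (/2)^(S k) else 0).
Proof. unfold dyadic_digit; cbn [dyadic_approx]; destruct (Rle_dec _ _); reflexivity. Qed.

Lemma smul_dyadic_approx_S h g k :
  smul (dyadic_approx h (S k)) g =
  sadd (smul (dyadic_approx h k) g) (sscal ((/2)^(S k)) (chi (dyadic_digit h k) g)).
Proof.
  apply functional_extensionality; intro n.
  unfold smul, sadd, sscal, chi; rewrite dyadic_approx_S.
  destruct (dyadic_digit h k n); ring.
Qed.

Lemma dyadic_approx_error h : (forall n, 0 <= h n <= 1) ->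
  forall k n, 0 <= h n - dyadic_approx h k n <= (/2)^k.
Proof.
  intros Hh k n. induction k as [|k IH].
  - simpl; unfold szero; specialize (Hh n); lra.
  - rewrite dyadic_approx_S; unfold dyadic_digit.
    replace ((/2)^(S k)) with (/2 * (/2)^k) by reflexivity.
    destruct (Rle_dec _ _); cbv iota; lra.
Qed.

Definition smul_norms (N : seqR -> R) (f : seqR) (r : R) : Prop :=
  exists h, (forall n, Rabs (h n) <= 1) /\ r = N (smul h f).

Definition sup_norm (N : seqR -> R) (f : seqR) : R :=
  epsilon (inhabits 0) (is_lub (smul_norms N f)).

Section BanachSeqSpace.

Variables (X : seqR -> Prop) (N : seqR -> R).
Hypothesis HX : banach_seq_space X N.

Lemma X_zero : X szero.
Proof. apply HX. Qed.

Lemma X_add f g : X f -> X g -> X (sadd f g).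
Proof. apply HX. Qed.

Lemma X_scal c f : X f -> X (sscal c f).
Proof. apply HX. Qed.

Lemma N_ge0 f : X f -> 0 <= N f.
Proof. apply HX. Qed.

Lemma N_eq0 f : X f -> N f = 0 -> f = szero.
Proof. apply HX. Qed.

Lemma N_scal c f : X f -> N (sscal c f) = Rabs c * N f.
Proof. apply HX. Qed.

Lemma N_triangle f g : X f -> X g -> N (sadd f g) <= N f + N g.
Proof. apply HX. Qed.

Lemma is_complete_N : is_complete X N.
Proof. apply HX. Qed.

Lemma X_sub f g : X f -> X g -> X (ssub f g).
Proof.
  intros Hf Hg.
  replace (ssub f g) with (sadd f (sscal (-1) g))
    by (apply functional_extensionality; intro n; unfold ssub, sadd, sscal; ring).
  auto using X_add, X_scal.
Qed.

Lemma N_zero : N szero = 0.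
Proof.
  replace szero with (sscal 0 szero)
    by (apply functional_extensionality; intro n; unfold sscal, szero; ring).
  rewrite N_scal by apply X_zero. rewrite Rabs_R0; ring.
Qed.

Lemma N_ssub_sym f g : X f -> X g -> N (ssub f g) = N (ssub g f).
Proof.
  intros Hf Hg.
  replace (ssub f g) with (sscal (-1) (ssub g f))
    by (apply functional_extensionality; intro n; unfold ssub, sscal; ring).
  rewrite N_scal by auto using X_sub. rewrite Rabs_left by lra; ring.
Qed.

Lemma N_le_of_converges u F B : (forall k, X (u k)) -> X F -> converges_in N u F ->
  (forall k, N (u k) <= B) -> N F <= B.
Proof.
  intros Hu HF Hconv HB. apply Rnot_lt_le; intro HBF.
  destruct (Hconv (N F - B)) as [K HK]; [lra|].
  specialize (HK K (Nat.le_refl K)). specialize (HB K).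
  pose proof (N_triangle (u K) (ssub F (u K)) (Hu K) (X_sub F (u K) HF (Hu K))) as Htri.
  replace (sadd (u K) (ssub F (u K))) with F in Htri
    by (apply functional_extensionality; intro n; unfold sadd, ssub; ring).
  rewrite N_ssub_sym in Htri by auto. lra.
Qed.

Lemma cauchy_of_geometric u B : (forall k, X (u k)) ->
  (forall k m, (k <= m)%nat -> N (ssub (u m) (u k)) <= B * (/2)^k) -> cauchy_in N u.
Proof.
  intros Hu Hgeo eps Heps. destruct (pow_half_small B eps Heps) as [K HK].
  exists K; intros m n Hm Hn. destruct (Nat.le_ge_cases n m) as [Hnm|Hmn].
  - specialize (Hgeo n m Hnm). specialize (HK n Hn). lra.
  - rewrite N_ssub_sym by auto.
    specialize (Hgeo m n Hmn). specialize (HK m Hm). lra.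
Qed.

Lemma is_complete_equivalent M : equivalent_norms X N M -> is_complete X M.
Proof.
  intros [a [b [Ha [Hb Hab]]]] u Hu Hcauchy.
  destruct (is_complete_N u Hu) as [F [HF Hconv]].
  - intros eps Heps. destruct (Hcauchy (a * eps)) as [K HK]; [nra|].
    exists K; intros m n Hm Hn. specialize (HK m n Hm Hn).
    destruct (Hab _ (X_sub (u m) (u n) (Hu m) (Hu n))) as [Hle _]. nra.
  - exists F; split; auto. intros eps Heps.
    destruct (Hconv (eps / b)) as [K HK]; [apply Rdiv_lt_0_compat; lra|].
    exists K; intros n Hn. specialize (HK n Hn).
    destruct (Hab _ (X_sub (u n) F (Hu n) HF)) as [_ Hle].
    apply (Rmult_lt_compat_l b) in HK; [|lra].
    replace (b * (eps / b)) with eps in HK by (field; lra). lra.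
Qed.


Section Rectangular.

Variable C : R.
Hypothesis HC : 0 < C.
Hypothesis HR : forall f A, X f -> X (chi A f) /\ N (chi A f) <= C * N f.

Lemma X_chi f A : X f -> X (chi A f).
Proof. apply HR. Qed.

Lemma N_chi_le f A : X f -> N (chi A f) <= C * N f.
Proof. apply HR. Qed.

Lemma coord_bounded n : exists K, 0 <= K /\ forall v, X v -> Rabs (v n) <= K * N v.
Proof.
  destruct (classic (exists w, X w /\ w n <> 0)) as [[w [Hw Hwn]] | Hnone].
  - set (e := sscal (/ w n) (chi (fun m => Nat.eqb m n) w)).
    assert (He : X e) by (apply X_scal, X_chi; auto).
    assert (Hproj : forall v, chi (fun m => Nat.eqb m n) v = sscal (v n) e).
    { intro v; apply functional_extensionality; intro m; unfold e, sscal, chi.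
      destruct (Nat.eqb_spec m n); [subst; field; auto | ring]. }
    assert (HNe : 0 < N e).
    { destruct (N_ge0 e He) as [|HNe]; auto. symmetry in HNe.
      apply N_eq0 in HNe; auto.
      assert (Hen : e n = 1) by (unfold e, sscal, chi; rewrite Nat.eqb_refl; field; auto).
      rewrite HNe in Hen; unfold szero in Hen; lra. }
    exists (C / N e); split; [apply Rlt_le, Rdiv_lt_0_compat; auto|].
    intros v Hv. pose proof (N_chi_le v (fun m => Nat.eqb m n) Hv) as Hc.
    rewrite Hproj, N_scal in Hc by auto.
    apply (Rmult_le_reg_r (N e)); auto.
    replace (C / N e * N v * N e) with (C * N v) by (field; lra). lra.
  - exists 0; split; [lra|]. intros v Hv.
    assert (Hvn : v n = 0) by (apply NNPP; intro Hvn; apply Hnone; eauto).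
    rewrite Hvn, Rabs_R0. pose proof (N_ge0 v Hv); lra.
Qed.

Lemma converges_pointwise u F : (forall k, X (u k)) -> X F -> converges_in N u F ->
  forall n, Un_cv (fun k => u k n) (F n).
Proof.
  intros Hu HF Hconv n eps Heps. destruct (coord_bounded n) as [K [HK Hbound]].
  assert (Heps' : 0 < eps / (K + 1)) by (apply Rdiv_lt_0_compat; lra).
  destruct (Hconv _ Heps') as [M HM]. exists M; intros k Hk.
  specialize (HM k Hk). specialize (Hbound _ (X_sub (u k) F (Hu k) HF)).
  change (Rabs (u k n - F n) <= K * N (ssub (u k) F)) in Hbound. unfold R_dist.
  assert (K * N (ssub (u k) F) <= K * (eps / (K + 1))) by (apply Rmult_le_compat_l; lra).
  replace (K * (eps / (K + 1))) with (eps - eps / (K + 1)) in H by (field; lra).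
  lra.
Qed.

Lemma X_smul_dyadic_approx h g k : X g -> X (smul (dyadic_approx h k) g).
Proof.
  intros Hg. induction k as [|k IH].
  - replace (smul (dyadic_approx h 0) g) with szero by
      (apply functional_extensionality; intro n; unfold smul, szero; simpl; unfold szero; ring).
    apply X_zero.
  - rewrite smul_dyadic_approx_S. auto using X_add, X_scal, X_chi.
Qed.

Lemma N_smul_dyadic_approx_sub h g k m : X g -> (k <= m)%nat ->
  N (ssub (smul (dyadic_approx h m) g) (smul (dyadic_approx h k) g))
  <= ((/2)^k - (/2)^m) * (C * N g).
Proof.
  intros Hg Hkm. induction Hkm as [|m Hkm IH].
  - replace (ssub _ _) with szero
      by (apply functional_extensionality; intro n; unfold ssub, szero; ring).
    rewrite N_zero; lra.
  - replace (ssub (smul (dyadic_approx h (S m)) g) (smul (dyadic_approx h k) g)) with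
      (sadd (ssub (smul (dyadic_approx h m) g) (smul (dyadic_approx h k) g))
            (sscal ((/2)^(S m)) (chi (dyadic_digit h m) g)))
      by (rewrite smul_dyadic_approx_S; apply functional_extensionality; intro n;
          unfold ssub, sadd, sscal; ring).
    eapply Rle_trans; [apply N_triangle; auto using X_sub, X_scal, X_smul_dyadic_approx, X_chi|].
    rewrite N_scal, Rabs_pos_eq by auto using X_chi, Rlt_le, pow_half_pos.
    pose proof (N_chi_le g (dyadic_digit h m) Hg).
    replace ((/2)^(S m)) with (/2 * (/2)^m) in * by reflexivity.
    pose proof (pow_half_pos m). nra.
Qed.

Lemma smul_unit_interval h g : X g -> (forall n, 0 <= h n <= 1) ->
  X (smul h g) /\ N (smul h g) <= C * N g.
Proof.
  intros Hg Hh. set (u := fun k => smul (dyadic_approx h k) g).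
  assert (Hu : forall k, X (u k)) by (intro; apply X_smul_dyadic_approx; auto).
  assert (HCg : 0 <= C * N g) by (pose proof (N_ge0 g Hg); nra).
  assert (Hcauchy : cauchy_in N u).
  { apply (cauchy_of_geometric u (C * N g)); auto. intros k m Hkm.
    eapply Rle_trans; [apply N_smul_dyadic_approx_sub; auto|].
    pose proof (pow_half_pos m); nra. }
  destruct (is_complete_N u Hu Hcauchy) as [F [HF Hconv]].
  assert (EF : F = smul h g).
  { apply functional_extensionality; intro n. apply (UL_sequence (fun k => u k n)).
    - apply converges_pointwise; auto.
    - apply (Un_cv_pow_half_error _ _ (Rabs (g n))); intro k. unfold u, smul.
      replace (dyadic_approx h k n * g n - h n * g n)
        with (- ((h n - dyadic_approx h k n) * g n)) by ring.
      pose proof (dyadic_approx_error h Hh k n).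
      rewrite Rabs_Ropp, Rabs_mult, (Rabs_pos_eq (h n - _)) by lra.
      pose proof (Rabs_pos (g n)); nra. }
  subst F; split; auto.
  apply (N_le_of_converges u); auto. intro k.
  pose proof (N_smul_dyadic_approx_sub h g 0 k Hg (Nat.le_0_l k)) as Hk.
  replace (ssub (smul (dyadic_approx h k) g) (smul (dyadic_approx h 0) g)) with (u k) in Hk
    by (apply functional_extensionality; intro n; unfold u, ssub, smul; simpl; unfold szero; ring).
  pose proof (pow_half_pos k); simpl pow in Hk; nra.
Qed.

Lemma smul_unit_ball h g : X g -> (forall n, Rabs (h n) <= 1) ->
  X (smul h g) /\ N (smul h g) <= (2 * C + 1) * N g.
Proof.
  intros Hg Hh.
  destruct (smul_unit_interval (fun n => (h n + 1) / 2) g) as [Xh' Nh']; auto.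
  { intro n; specialize (Hh n); unfold Rabs in Hh; destruct (Rcase_abs (h n)); lra. }
  replace (smul h g) with (sadd (sscal 2 (smul (fun n => (h n + 1) / 2) g)) (sscal (-1) g))
    by (apply functional_extensionality; intro n; unfold smul, sadd, sscal; field).
  split; [auto using X_add, X_scal|].
  eapply Rle_trans; [apply N_triangle; auto using X_scal|].
  rewrite !N_scal by auto. rewrite Rabs_pos_eq, Rabs_left by lra. lra.
Qed.

Lemma is_ideal_rectangular : is_ideal X.
Proof.
  intros f g Hg Hfg. destruct (dominated_smul f g Hfg) as [k [Hk ->]].
  apply smul_unit_ball; auto.
Qed.

Lemma sup_norm_lub f : X f -> is_lub (smul_norms N f) (sup_norm N f).
Proof.
  intros Hf. unfold sup_norm. apply epsilon_spec.
  destruct (completeness (smul_norms N f)) as [m Hm]; eauto.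
  - exists ((2 * C + 1) * N f). intros r [h [Hh ->]]. apply smul_unit_ball; auto.
  - exists (N f), (fun _ => 1). split; [intro; rewrite Rabs_R1; lra|].
    f_equal; apply functional_extensionality; intro n; unfold smul; ring.
Qed.

Lemma N_smul_le_sup_norm h f : X f -> (forall n, Rabs (h n) <= 1) ->
  N (smul h f) <= sup_norm N f.
Proof. intros Hf Hh. apply (sup_norm_lub f Hf). exists h; auto. Qed.

Lemma sup_norm_le f b : X f ->
  (forall h, (forall n, Rabs (h n) <= 1) -> N (smul h f) <= b) -> sup_norm N f <= b.
Proof. intros Hf Hb. apply (sup_norm_lub f Hf). intros r [h [Hh ->]]; auto. Qed.

Lemma N_le_sup_norm f : X f -> N f <= sup_norm N f.
Proof.
  intros Hf. replace (N f) with (N (smul (fun _ => 1) f))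
    by (f_equal; apply functional_extensionality; intro n; unfold smul; ring).
  apply N_smul_le_sup_norm; auto. intro; rewrite Rabs_R1; lra.
Qed.

Lemma sup_norm_le_N f : X f -> sup_norm N f <= (2 * C + 1) * N f.
Proof. intros Hf. apply sup_norm_le; auto. intros h Hh. apply smul_unit_ball; auto. Qed.

Lemma sup_norm_scal_le c f : X f -> sup_norm N (sscal c f) <= Rabs c * sup_norm N f.
Proof.
  intros Hf. apply sup_norm_le; [auto using X_scal|]. intros h Hh.
  replace (smul h (sscal c f)) with (sscal c (smul h f))
    by (apply functional_extensionality; intro n; unfold smul, sscal; ring).
  rewrite N_scal by apply (smul_unit_ball h f Hf Hh).
  apply Rmult_le_compat_l; [apply Rabs_pos | apply N_smul_le_sup_norm; auto].
Qed.

Lemma sup_norm_is_norm : is_norm_on X (sup_norm N).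
Proof.
  split; [|split; [|split]].
  - intros f Hf. pose proof (N_ge0 f Hf); pose proof (N_le_sup_norm f Hf); lra.
  - intros f Hf H0. apply N_eq0; auto.
    pose proof (N_ge0 f Hf); pose proof (N_le_sup_norm f Hf); lra.
  - intros c f Hf. apply Rle_antisym; [apply sup_norm_scal_le; auto|].
    destruct (Req_dec c 0) as [->|Hc].
    + rewrite Rabs_R0, Rmult_0_l. pose proof (X_scal 0 f Hf).
      pose proof (N_ge0 _ H); pose proof (N_le_sup_norm _ H); lra.
    + pose proof (sup_norm_scal_le (/ c) (sscal c f) (X_scal c f Hf)) as Hinv.
      replace (sscal (/ c) (sscal c f)) with f in Hinv
        by (apply functional_extensionality; intro n; unfold sscal; field; auto).
      rewrite Rabs_inv in Hinv. pose proof (Rabs_pos_lt c Hc).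
      apply (Rmult_le_compat_l (Rabs c)) in Hinv; [|lra].
      rewrite <- Rmult_assoc, Rinv_r in Hinv by lra. lra.
  - intros f g Hf Hg. apply sup_norm_le; [auto using X_add|]. intros h Hh.
    replace (smul h (sadd f g)) with (sadd (smul h f) (smul h g))
      by (apply functional_extensionality; intro n; unfold smul, sadd; ring).
    eapply Rle_trans; [apply N_triangle; apply smul_unit_ball; auto|].
    pose proof (N_smul_le_sup_norm h f Hf Hh); pose proof (N_smul_le_sup_norm h g Hg Hh); lra.
Qed.

Lemma sup_norm_lattice : is_lattice_norm X (sup_norm N).
Proof.
  intros f g Hf Hg Hfg. destruct (dominated_smul f g Hfg) as [k [Hk ->]].
  apply sup_norm_le; auto. intros h Hh.
  replace (smul h (smul k g)) with (smul (fun n => h n * k n) g)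
    by (apply functional_extensionality; intro n; unfold smul; ring).
  apply N_smul_le_sup_norm; auto. intro n. rewrite Rabs_mult.
  specialize (Hh n); specialize (Hk n); pose proof (Rabs_pos (h n)); nra.
Qed.

Lemma sup_norm_equivalent : equivalent_norms X N (sup_norm N).
Proof.
  exists 1, (2 * C + 1); repeat split; try lra.
  - rewrite Rmult_1_l; apply N_le_sup_norm; auto.
  - apply sup_norm_le_N; auto.
Qed.

Lemma banach_function_space_sup_norm : banach_function_space X (sup_norm N).
Proof.
  split; [split; [apply HX | split]|split].
  - apply sup_norm_is_norm.
  - apply is_complete_equivalent, sup_norm_equivalent.
  - apply is_ideal_rectangular.
  - apply sup_norm_lattice.
Qed.

End Rectangular.

End BanachSeqSpace.

Lemma rectangular_of_equivalent_function_space X N M :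
  equivalent_norms X N M -> banach_function_space X M -> is_rectangular X N.
Proof.
  intros [a [b [Ha [Hb Hab]]]] [_ [Hideal Hlattice]].
  exists (b / a); split; [apply Rdiv_lt_0_compat; auto|]. intros f A Hf.
  assert (Hdom : forall n, Rabs (chi A f n) <= Rabs (f n)).
  { intro n; unfold chi; destruct (A n); [lra|]. rewrite Rabs_R0; apply Rabs_pos. }
  assert (HAf : X (chi A f)) by (apply (Hideal _ f); auto).
  split; auto.
  destruct (Hab _ HAf) as [HaAf _]. destruct (Hab _ Hf) as [_ Hbf].
  pose proof (Hlattice _ _ HAf Hf Hdom).
  apply (Rmult_le_reg_l a); auto.
  replace (a * (b / a * N f)) with (b * N f) by (field; lra). lra.
Qed.

Theorem corollary4p6 (mu : nat -> R)
  (mu_pos : forall n, 0 < mu n)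
  (mu_finite : exists l, infinite_sum mu l)
  (X : seqR -> Prop) (N : seqR -> R)
  (HX : banach_seq_space X N) :
  (exists N', equivalent_norms X N N' /\ banach_function_space X N') <->
  banach_rectangular_function_space X N.
Proof.
  split.
  - intros [M [Hequiv HM]]. split; auto.
    exact (rectangular_of_equivalent_function_space X N M Hequiv HM).
  - intros [_ [C [HC HR]]]. exists (sup_norm N). split.
    + exact (sup_norm_equivalent X N HX C HC HR).
    + exact (banach_function_space_sup_norm X N HX C HC HR).
Qed.
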